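(* Let $s=(s_m)_{m\ge1}$ be a scale with $S=\mathrm{lcm}(s_m)$ infinite. Then the functions $\{1_{(x)}\}_{x=0,1,2,\dots}$ freely generate the abelian group $C(\mathbb Z_S,\mathbb Z)$ of continuous integer-valued functions on $\mathbb Z_S$: every $f\in C(\mathbb Z_S,\mathbb Z)$ can be written uniquely as a finite sum $f=\sum_{x\ge0}f_{(x)}1_{(x)}$ with $f_{(x)}\in\mathbb Z$.
   Context: A scale is a sequence of positive integers $(s_m)_{m\ge1}$ with $s_m\mid s_{m+1}$ and $s_m<s_{m+1}$; set $s_0=1$. $\mathbb Z_S=\varprojlim\mathbb Z/s_m\mathbb Z$ (sequences $(y_m)$ with $y_{m+1}\equiv y_m \bmod s_m$, product topology), containing $\mathbb Z$ as a dense subgroup. For $w\in\mathbb Z_S$ and $n\ge0$, ''$s_n\mid w$'' means the image of $w$ in $\mathbb Z/s_n\mathbb Z$ is $0$. For $n\ge0$ and integer $0\le x<s_n$, $1_{(n,x)}$ is the function on $\mathbb Z_S$ equal to $1$ at $z$ if $s_n\mid(z-x)$ and $0$ otherwise. For integers $x\ge1$ let $n(x)\ge1$ be defined by $s_{n(x)-1}\le x<s_{n(x)}$, and set $1_{(x)}:=1_{(n(x),x)}$; also $1_{(0)}:=1_{(0,0)}\equiv1$. *)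

From mathcomp Require Import all_boot all_order all_algebra.
From Stdlib Require Import ClassicalEpsilon.
Unset Printing Implicit Defensive.
Import Order.TTheory GRing.Theory Num.Theory.

Definition is_scale (s : nat -> nat) : Prop :=
  s 0 = 1 /\ (forall m, 0 < m -> 0 < s m) /\
  (forall m, 0 < m -> s m %| s m.+1 /\ s m < s m.+1).

(* Z_S = inverse limit of Z/s_m Z : compatible sequences of residues
   y m \in {0,..,s m - 1} with y (m+1) = y m mod s m.  (The coordinate m = 0,
   Z/1Z, is trivial.) *)
Definition Zs (s : nat -> nat) : Type :=
  {y : nat -> nat | forall m, y m < s m /\ y m.+1 %% s m = y m}.

Definition coord (s : nat -> nat) (z : Zs s) (m : nat) : nat := proj1_sig z m.

(* Continuity for the product topology on Z_S, with Z discrete: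
   every point has a cylinder neighbourhood (fixing finitely many
   coordinates, w.l.o.g. the first n+1) on which f is constant. *)
Definition continuousZ (s : nat -> nat) (f : Zs s -> int) : Prop :=
  forall z : Zs s, exists n : nat, forall w : Zs s,
    (forall m, m <= n -> coord s w m = coord s z m) -> f w = f z.

(* 1_{(n,x)} : equals 1 at z iff s_n | (z - x), i.e. the image of z in
   Z/s_n Z equals x mod s_n. *)
Definition ind (s : nat -> nat) (n x : nat) (z : Zs s) : int :=
  if coord s z n == x %% s n then 1%R else 0%R.

Definition nidx (s : nat -> nat) (x : nat) : nat :=
  epsilon (inhabits 0%N) (fun n => 0 < n /\ s n.-1 <= x < s n).

Definition ind1 (s : nat -> nat) (x : nat) (z : Zs s) : int :=
  if x == 0 then ind s 0 0 z else ind s (nidx s x) x z.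

(* Every continuous f : Z_S -> Z is uniformly continuous (Z_S is compact), so it
   factors through the projection to some Z/s_n Z and is determined by its values
   at the integers 0, ..., s_n - 1.  On the integers the matrix (1_(x)(y)) is
   unitriangular: 1_(x)(x) = 1 and 1_(x)(y) = 0 for y < x, because x < s_(n(x)).
   Solving this triangular system gives existence, and evaluating a vanishing
   combination at 0, 1, 2, ... in turn gives uniqueness. *)

From Pilot Require Import Defs.
From Stdlib Require Import Classical ClassicalEpsilon.
From mathcomp Require Import all_boot all_order all_algebra.
From mathcomp Require Import zify.
Import GRing.Theory.

(* [coord] of all_algebra (coordinates in a vector space) shadows Defs.coord. *)
Notation coord := Defs.coord.

Lemma ex_bound_mono (Q : nat -> nat -> Prop) b :
    (forall r k K, k <= K -> Q r k -> Q r K) ->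
    (forall r, r < b -> exists k, Q r k) ->
  exists K, forall r, r < b -> Q r K.
Proof.
move=> Qmono; elim: b => [|b IH] Qex; first by exists 0.
have [K1 HK1] := IH (fun r rb => Qex r (ltnW rb)).
have [k Hk] := Qex b (ltnSn b).
exists (maxn K1 k) => r; rewrite ltnS leq_eqVlt => /orP[/eqP ->|rb].
  exact: Qmono (leq_maxr _ _) Hk.
exact: Qmono (leq_maxl _ _) (HK1 r rb).
Qed.

Section Scale.

Context {s : nat -> nat} (hs : is_scale s).

Lemma scale_pos m : 0 < s m.
Proof. by case: hs => s0 [spos _]; case: m => [|m]; [rewrite s0 | exact: spos]. Qed.

Lemma scale_dvd m n : m <= n -> s m %| s n.
Proof.
move=> /subnK <-; elim: (n - m) => [|k IH]; first by rewrite dvdnn.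
rewrite addSn; apply: dvdn_trans IH _; case: (k + m) => [|j].
  by case: hs => -> _; rewrite dvd1n.
by case: hs => _ [_ /(_ j.+1 isT) []].
Qed.

Lemma scale_le m n : m <= n -> s m <= s n.
Proof. by move=> mn; apply: dvdn_leq; [exact: scale_pos | exact: scale_dvd]. Qed.

Lemma coordP (z : Zs s) m :
  coord s z m < s m /\ coord s z m.+1 %% s m = coord s z m.
Proof. exact: (proj2_sig z m). Qed.

Lemma coord_modn (z : Zs s) {m n} : m <= n -> coord s z n %% s m = coord s z m.
Proof.
move=> /subnK <-; elim: (n - m) => [|k IH].
  by rewrite modn_small //; case: (coordP z m).
by rewrite addSn -IH -(coordP z (k + m)).2 modn_dvdm // scale_dvd ?leq_addl.
Qed.

Lemma coord0 (z : Zs s) : coord s z 0 = 0.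
Proof. by have := (coordP z 0).1; case: hs => -> _; case: coord. Qed.

Definition depends_on (f : Zs s -> int) n :=
  forall w w', coord s w n = coord s w' n -> f w = f w'.

(* [varies f n r k]: on the cylinder of level n above r, the coordinate at
   level k does not determine f. *)
Definition varies (f : Zs s -> int) n r k :=
  exists w w', coord s w n = r /\ coord s w k = coord s w' k /\ f w <> f w'.

Definition wild (f : Zs s -> int) n r := forall k, varies f n r k.

Lemma varies_le {f : Zs s -> int} {n r k K} : k <= K -> varies f n r K -> varies f n r k.
Proof.
move=> kK [w [w' [wn [wwK fww]]]]; exists w, w'; split=> //; split=> //.
by rewrite -(coord_modn w kK) -(coord_modn w' kK) wwK.
Qed.

Lemma wild_child {f : Zs s -> int} {n r} :
  wild f n r -> exists r', r' %% s n = r /\ r' < s n.+1 /\ wild f n.+1 r'.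
Proof.
move=> fw; apply: NNPP => nochild.
have tame r' : r' < s n.+1 -> exists k, r' %% s n = r -> ~ varies f n.+1 r' k.
  move=> r'lt; case: (classic (r' %% s n = r)) => [r'r|]; last by exists 0.
  have [k nvk] : exists k, ~ varies f n.+1 r' k.
    by apply: (not_all_ex_not _ (varies f n.+1 r')) => fw'; apply: nochild; exists r'.
  by exists k.
have [K tameK] := ex_bound_mono
  (fun r' k => r' %% s n = r -> ~ varies f n.+1 r' k) _
  (fun r' k K kK nvk r'r vK => nvk r'r (varies_le kK vK)) tame.
have [w [w' [wn [wwK fww]]]] := fw K.
apply: (tameK (coord s w n.+1) (coordP w n.+1).1).
  by rewrite (coordP w n).2.
by exists w, w'.
Qed.

Definition next_wild (f : Zs s -> int) n r :=
  epsilon (inhabits 0) (fun r' => r' %% s n = r /\ r' < s n.+1 /\ wild f n.+1 r').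

Lemma next_wildP {f : Zs s -> int} {n r} : wild f n r ->
  next_wild f n r %% s n = r /\ next_wild f n r < s n.+1 /\
  wild f n.+1 (next_wild f n r).
Proof.
move=> fw; exact: (epsilon_spec (inhabits 0)
  (fun r' => r' %% s n = r /\ r' < s n.+1 /\ wild f n.+1 r') (wild_child fw)).
Qed.

Fixpoint wild_path (f : Zs s -> int) n :=
  if n is n'.+1 then next_wild f n' (wild_path f n') else 0.

Lemma continuous_depends_on {f : Zs s -> int} :
  continuousZ s f -> exists n, depends_on f n.
Proof.
move=> fc; apply: NNPP => nodep.
have wild00 : wild f 0 0.
  move=> k; apply: NNPP => nvk; apply: nodep; exists k => w w' ww.
  by apply: NNPP => fww; apply: nvk; exists w, w'; rewrite coord0.
have path_wild n : wild f n (wild_path f n).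
  by elim: n => // n IH; case: (next_wildP IH) => _ [].
(* the wild cylinders are nested, so they shrink to a point of Z_S where f is
   discontinuous *)
have pathP m : wild_path f m < s m /\ wild_path f m.+1 %% s m = wild_path f m.
  have [pmod [plt _]] := next_wildP (path_wild m).
  split=> //; case: m pmod plt => [|m] _ _; first by case: hs => ->.
  by case: (next_wildP (path_wild m)) => _ [].
pose z : Zs s := exist _ (wild_path f) pathP.
have [n fz] := fc z.
have [w [w' [wn [wwn fww]]]] := path_wild n n.
have near_z v : coord s v n = wild_path f n -> f v = f z.
  move=> vn; apply: fz => m mn.
  by rewrite -(coord_modn v mn) -(coord_modn z mn) vn.
by apply: fww; rewrite near_z // near_z // -wwn.
Qed.

Lemma nat_coordP r m : r %% s m < s m /\ r %% s m.+1 %% s m = r %% s m.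
Proof. by rewrite ltn_pmod ?scale_pos // modn_dvdm // scale_dvd. Qed.

Definition Zs_of_nat r : Zs s := exist _ (fun m => r %% s m) (nat_coordP r).

Lemma coord_Zs_of_nat r m : coord s (Zs_of_nat r) m = r %% s m.
Proof. by []. Qed.

Lemma coordK (z : Zs s) n : coord s (Zs_of_nat (coord s z n)) n = coord s z n.
Proof. by rewrite coord_Zs_of_nat modn_small //; case: (coordP z n). Qed.

Definition level x := if x == 0 then 0 else nidx s x.

Lemma ind1E x z : ind1 s x z = ind s (level x) x z.
Proof. by rewrite /ind1 /level; case: eqP => [->|]. Qed.

Lemma ind1_continuous x : continuousZ s (ind1 s x).
Proof. by move=> z; exists (level x) => w /(_ _ (leqnn _)) wz; rewrite !ind1E /ind wz. Qed.

Hypothesis hS : forall N, exists m, N < s m.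

Lemma nidxP {x} : 0 < x -> 0 < nidx s x /\ s (nidx s x).-1 <= x < s (nidx s x).
Proof.
move=> x0; apply: (epsilon_spec (inhabits 0) (fun n => 0 < n /\ _)).
have [n xn nmin] := ex_minnP (hS x).
have s0 : s 0 = 1 by case: hs.
exists n; case: n xn nmin => [|n] xn nmin; first by move: xn; rewrite s0; lia.
split=> //; rewrite xn andbT /= leqNgt; apply/negP => /nmin; lia.
Qed.

Lemma level_le {x n} : x < s n -> level x <= n.
Proof.
rewrite /level; have [-> // | x0] := posnP x; move=> xn.
have [_ /andP[sx _]] := nidxP x0.
rewrite leqNgt; apply/negP => nlt.
by have := @scale_le n (nidx s x).-1 (_ : n <= _); lia.
Qed.

Lemma ind1_depends_on {x n} : x < s n -> depends_on (ind1 s x) n.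
Proof.
move=> xn w w' ww; rewrite !ind1E /ind.
by rewrite -!(coord_modn _ (level_le xn)) ww.
Qed.

Lemma ind1_nat_id x : ind1 s x (Zs_of_nat x) = 1%R.
Proof. by rewrite ind1E /ind eqxx. Qed.

Lemma ind1_nat_lt x y : y < x -> ind1 s x (Zs_of_nat y) = 0%R.
Proof.
move=> yx; have x0 : 0 < x by lia.
rewrite /ind1 eqn0Ngt x0 /= /ind coord_Zs_of_nat.
have [_ /andP[_ xs]] := nidxP x0.
by rewrite !modn_small //; [case: eqP => //; lia | lia].
Qed.

Local Open Scope ring_scope.

Lemma ind1_interpolate (f : Zs s -> int) k :
  exists c : nat -> int, (forall x, (k <= x)%N -> c x = 0) /\
    forall y, (y < k)%N -> f (Zs_of_nat y) = \sum_(x < k) c x * ind1 s x (Zs_of_nat y).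
Proof.
elim: k => [|k [c [c0 fc]]]; first by exists (fun => 0).
pose v := f (Zs_of_nat k) - \sum_(x < k) c x * ind1 s x (Zs_of_nat k).
exists (fun x => if x == k then v else c x); split.
  by move=> x kx; rewrite ifF ?c0; lia.
move=> y yk; rewrite big_ord_recr /= eqxx.
under eq_bigr => i _ do rewrite ifN ?neq_ltn ?ltn_ord //.
move: yk; rewrite ltnS leq_eqVlt => /orP[/eqP ->|yk].
  by rewrite ind1_nat_id mulr1 addrC subrK.
by rewrite ind1_nat_lt // mulr0 addr0 fc.
Qed.

Lemma ind1_span {f : Zs s -> int} {n} : depends_on f n ->
  exists c : nat -> int, (forall x, (s n <= x)%N -> c x = 0) /\
    forall z, f z = \sum_(x < s n) c x * ind1 s x z.
Proof.
move=> df; have [c [c0 fc]] := ind1_interpolate f (s n).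
exists c; split=> // z; set y := coord s z n.
rewrite (df z (Zs_of_nat y)) ?coordK // fc; last by case: (coordP z n).
apply: eq_bigr => i _; congr (_ * _).
by apply: ind1_depends_on (ltn_ord i) _ _ _; rewrite coordK.
Qed.

Lemma ind1_free {M} {d : nat -> int} :
  (forall z, \sum_(x < M) d x * ind1 s x z = 0) -> forall x, (x < M)%N -> d x = 0.
Proof.
move=> d0; elim/ltn_ind => x IH xM.
have := d0 (Zs_of_nat x); rewrite (bigD1 (Ordinal xM)) //= ind1_nat_id mulr1.
rewrite big1 ?addr0 // => i neq.
have /orP[ix|xi] : (i < x)%N || (x < i)%N.
  by rewrite -neq_ltn; apply: contra_neq neq => ix; apply: val_inj.
- by rewrite IH ?mul0r.
- by rewrite ind1_nat_lt ?mulr0.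
Qed.

Lemma sum_ind1_widen (c : nat -> int) N M z : (N <= M)%N ->
    (forall x, (N <= x)%N -> c x = 0) ->
  \sum_(x < N) c x * ind1 s x z = \sum_(x < M) c x * ind1 s x z.
Proof.
move=> NM c0; rewrite (big_ord_widen _ (fun x => c x * ind1 s x z) NM) big_mkcond.
by apply: eq_bigr => i _; case: ltnP => // /c0 ->; rewrite mul0r.
Qed.

Lemma ind1_coef_unique {c c' : nat -> int} {N N'} :
    (forall x, (N <= x)%N -> c x = 0) -> (forall x, (N' <= x)%N -> c' x = 0) ->
    (forall z, \sum_(x < N) c x * ind1 s x z = \sum_(x < N') c' x * ind1 s x z) ->
  forall x, c x = c' x.
Proof.
move=> c0 c'0 cc' x; pose M := maxn N N'.
have dM : forall z, \sum_(i < M) (c i - c' i) * ind1 s i z = 0.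
  move=> z; under eq_bigr => i _ do rewrite mulrBl.
  rewrite sumrB -(@sum_ind1_widen c N M) ?leq_maxl //.
  by rewrite -(@sum_ind1_widen c' N' M) ?leq_maxr // cc' subrr.
have [xM|] := ltnP x M.
  by apply/subr0_eq; exact: (ind1_free (d := fun i => c i - c' i) dM x xM).
by rewrite geq_max => /andP[/c0 -> /c'0 ->].
Qed.

End Scale.

Local Open Scope ring_scope.

Theorem mainTheorem11 (s : nat -> nat) (hs : is_scale s)
    (hS : forall N : nat, exists m : nat, (N < s m)%N) :
  (forall x : nat, continuousZ s (ind1 s x)) /\
  (forall f : Zs s -> int, continuousZ s f ->
     exists c : nat -> int,
       (exists N : nat, (forall x, (N <= x)%N -> c x = 0) /\
          (forall z, f z = \sum_(x < N) c x * ind1 s x z)) /\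
       (forall (c' : nat -> int) (N' : nat),
          (forall x, (N' <= x)%N -> c' x = 0) ->
          (forall z, f z = \sum_(x < N') c' x * ind1 s x z) ->
          forall x, c' x = c x)).
Proof.
split; first exact: ind1_continuous.
move=> f fc; have [n df] := continuous_depends_on hs fc.
have [c [c0 fc_sum]] := ind1_span hs hS df.
exists c; split; first by exists (s n).
move=> c' N' c'0 fc'_sum.
by apply: (ind1_coef_unique hs hS c'0 c0) => z; rewrite -fc'_sum -fc_sum.
Qed.
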